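(* Let $G$ be a finite connected graph and $v$ a vertex of valence two whose two adjacent edges $e_1\neq e_2$ are distinct. Let $G^v$ be the graph obtained by replacing the segment $e_1ve_2$ by a single new edge $e_v$ (so $V(G^v)=V(G)\setminus\{v\}$, $E(G^v)=\{e_v\}\cup E(G)\setminus\{e_1,e_2\}$, with $e_v$ joining the endpoints of $e_1,e_2$ other than $v$). Then $\mathrm{cX}(G)$ and $\mathrm{cX}(G^v)$ are homotopy equivalent.
   Context: Graphs may have loops and multiple edges; subgraphs are edge-induced. $\mathrm{cX}(G)$ is the poset, under inclusion, of proper connected subgraphs $H\neq G$ of $G$ with non-trivial fundamental group. Topological properties of posets refer to geometric realisations of order complexes. *)

From Stdlib Require Import Reals.
From mathcomp Require Import all_boot.
Set Implicit Arguments. Unset Strict Implicit. Unset Printing Implicit Defensive.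

(* Each edge e has endpoints src e and tgt e (the orientation is irrelevant;
   a loop has src e = tgt e). *)
Record graph := Graph {
  gV : finType;
  gE : finType;
  src : gE -> gV;
  tgt : gE -> gV }.

Section GraphDefs.
Variable G : graph.

Definition incident (e : gE G) (x : gV G) : bool := (src e == x) || (tgt e == x).

(* valence: a loop counts twice *)
Definition valence (x : gV G) : nat :=
  \sum_(e : gE G) ((src e == x) + (tgt e == x)).

(* the endpoint of e other than x (meaningful when e is incident to x) *)
Definition other_end (e : gE G) (x : gV G) : gV G :=
  if src e == x then tgt e else src e.

Definition adj_in (S : {set gE G}) : rel (gV G) :=
  fun x y => [exists e in S, ((src e == x) && (tgt e == y)) ||
                             ((src e == y) && (tgt e == x))].

Definition connected_graph : Prop :=
  (0 < #|gV G|) /\ forall x y : gV G, connect (adj_in [set: gE G]) x y.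

Definition sub_vertices (S : {set gE G}) : {set gV G} :=
  [set x | [exists e in S, incident e x]].

Definition sub_connected (S : {set gE G}) : bool :=
  (0 < #|sub_vertices S|) &&
  [forall x in sub_vertices S, forall y in sub_vertices S, connect (adj_in S) x y].

(* rank of the (free) fundamental group of a connected graph: |E| - |V| + 1 *)
Definition pi1_rank (S : {set gE G}) : nat := #|S| + 1 - #|sub_vertices S|.

(* cX(G): proper connected edge-induced subgraphs with nontrivial pi_1,
   represented by their edge sets; ordered by inclusion. *)
Definition cX : pred {set gE G} :=
  fun S => [&& S \proper [set: gE G], sub_connected S & 0 < pi1_rank S].

End GraphDefs.

(* G^v : vertices {x | x != v}; edges: None = the new edge e_v,
   Some e for e not in {e1, e2}.  a', b' are the far endpoints of e1, e2. *)
Section Smooth.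
Variables (G : graph) (v : gV G) (e1 e2 : gE G) (a' b' : {x : gV G | x != v}).

Definition smV : finType := {x : gV G | x != v}.
Definition smE : finType := option {e : gE G | e \notin [set e1; e2]}.

Definition sm_src (f : smE) : smV :=
  match f with None => a' | Some e => insubd a' (src (val e)) end.
Definition sm_tgt (f : smE) : smV :=
  match f with None => b' | Some e => insubd a' (tgt (val e)) end.

Definition smooth : graph := @Graph smV smE sm_src sm_tgt.
End Smooth.

Local Open Scope R_scope.

(* |Delta(P)| for the subposet P of (T, le): points x : T -> R, x >= 0,
   supported on P, summing to 1, with support a chain.  Topology: subspace of R^T. *)
Definition realization (T : finType) (P : pred T) (le : rel T) (x : T -> R) : Prop :=
  (forall t, 0 <= x t) /\ (forall t, ~~ P t -> x t = 0) /\
  \big[Rplus/0]_(t : T) x t = 1 /\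
  (forall s t, 0 < x s -> 0 < x t -> le s t \/ le t s).

Definition maps_into (I J : finType) (A : (I -> R) -> Prop) (B : (J -> R) -> Prop)
  (f : (I -> R) -> (J -> R)) : Prop := forall x, A x -> B (f x).

Definition continuous_on (I J : finType) (A : (I -> R) -> Prop)
  (f : (I -> R) -> (J -> R)) : Prop :=
  forall x, A x -> forall eps, 0 < eps -> exists delta, 0 < delta /\
    forall y, A y -> (forall i, Rabs (y i - x i) < delta) ->
      forall j, Rabs (f y j - f x j) < eps.

Definition homotopic (I J : finType) (A : (I -> R) -> Prop) (B : (J -> R) -> Prop)
  (f g : (I -> R) -> (J -> R)) : Prop :=
  exists H : R -> (I -> R) -> (J -> R),
    (forall t x, 0 <= t <= 1 -> A x -> B (H t x)) /\
    (forall t x, 0 <= t <= 1 -> A x -> forall eps, 0 < eps -> exists delta, 0 < delta /\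
       forall s y, 0 <= s <= 1 -> A y -> Rabs (s - t) < delta ->
         (forall i, Rabs (y i - x i) < delta) ->
         forall j, Rabs (H s y j - H t x j) < eps) /\
    (forall x, A x -> H 0 x = f x) /\ (forall x, A x -> H 1 x = g x).

Definition homotopy_equivalent (I J : finType) (A : (I -> R) -> Prop)
  (B : (J -> R) -> Prop) : Prop :=
  exists (f : (I -> R) -> (J -> R)) (g : (J -> R) -> (I -> R)),
    maps_into A B f /\ maps_into B A g /\ continuous_on A f /\ continuous_on B g /\
    homotopic A A (fun x => g (f x)) (fun x => x) /\
    homotopic B B (fun y => f (g y)) (fun y => y).

Definition cX_space (G : graph) : ({set gE G} -> R) -> Prop :=
  realization (@cX G) (fun S T : {set gE G} => S \subset T).

(* Edge sets of subgraphs of G and of G^v correspond through the monotone maps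
     smooth_set S    = (S minus e1, e2) plus e_v if both e1 and e2 lie in S,
     unsmooth_set S' = (S' minus e_v) plus e1 and e2 if e_v lies in S'.
   Both preserve cX: connectivity is carried along the evident vertex maps, and the
   rank |E| - |V| + 1 does not decrease.  Moreover smooth_set (unsmooth_set S') = S'
   and unsmooth_set (smooth_set S) is contained in S.  By Quillen's order homotopy
   lemma a poset map below the identity induces a map homotopic to the identity on
   order complexes, so the two maps induce mutually inverse homotopy equivalences.
   On realizations, a poset map acts by pushing the barycentric weights forward.  For
   f below the identity, the homotopy from this pushforward to the identity moves the
   weight of a chain p1 < ... < pk from the bottom up, so that its support always lies
   in the chain f p1 <= ... <= f pi <= pi <= ... <= pk. *)

From Stdlib Require Import Reals Lra Classical FunctionalExtensionality.
From mathcomp Require Import all_boot zify Rstruct.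
Set Implicit Arguments. Unset Strict Implicit. Unset Printing Implicit Defensive.

Lemma homo_connect (T U : finType) (r : rel T) (r' : rel U) (h : T -> U) :
  {homo h : x y / r x y >-> connect r' x y} ->
  {homo h : x y / connect r x y >-> connect r' x y}.
Proof.
move=> hr x _ /connectP [p + ->]; elim: p x => [|y p IHp] x /=.
  by move=> _; apply: connect0.
by case/andP=> /hr rxy /IHp; apply: connect_trans.
Qed.

Lemma card_set_option (T : finType) (S : {set option T}) :
  #|S| = (None \in S) + #|[set u | Some u \in S]|.
Proof.
rewrite (cardsD1 None) -[#|[set u | _]|](card_imset _ (@Some_inj _)); congr (_ + _).
apply: eq_card => [[u|]]; rewrite !inE /=.
  by rewrite (mem_imset _ _ (@Some_inj _)) inE.
by apply/esym/imsetP => -[].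
Qed.

Lemma card_sig_setD (T : finType) (A S : {set T}) :
  #|[set u : {x | x \notin A} | val u \in S]| = #|S :\: A|.
Proof.
rewrite -(card_imset _ val_inj); apply: eq_card => x; rewrite inE.
apply/imsetP/andP => [[u + ->] | [xA xS]]; first by rewrite inE (valP u).
by exists (Sub x xA); rewrite ?inE.
Qed.

Section Subgraphs.
Variable H : graph.
Implicit Types (S : {set gE H}) (e : gE H) (x y : gV H).

Lemma adj_in_sym S : symmetric (adj_in S).
Proof. by move=> x y; apply: eq_existsb => e; rewrite orbC. Qed.

Lemma connect_adj_in_sym S : connect_sym (adj_in S).
Proof. exact/sym_connect_sym/adj_in_sym. Qed.

Lemma connect_edge S e : e \in S -> connect (adj_in S) (src e) (tgt e).
Proof. by move=> eS; apply/connect1/existsP; exists e; rewrite eS !eqxx. Qed.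

Lemma incident_ends e x :
  incident e x -> (src e = x /\ tgt e = other_end e x) \/ (tgt e = x /\ src e = other_end e x).
Proof. by rewrite /incident /other_end; case: eqP => [|_] /= => [-> | /eqP ->]; [left | right]. Qed.

Lemma connect_ends (U : finType) (r : rel U) (h : gV H -> U) e x :
  connect_sym r -> incident e x ->
  connect r (h (src e)) (h (tgt e)) = connect r (h x) (h (other_end e x)).
Proof. by move=> r_sym /incident_ends [[-> ->] | [-> ->]] //; apply: r_sym. Qed.

Lemma card_incident_le_valence x : #|[set e | incident e x]| <= valence x.
Proof.
rewrite /valence -sum1_card big_mkcond /=; apply: leq_sum => e _.
by rewrite inE /incident; case: (src e == x); case: (tgt e == x).
Qed.

Lemma sub_verticesP S x : reflect (exists2 e, e \in S & incident e x) (x \in sub_vertices S).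
Proof.
by rewrite inE; apply: (iffP existsP) => [[e /andP []] | [e eS ex]]; exists e; rewrite ?eS.
Qed.

Lemma src_sub_vertices S e : e \in S -> src e \in sub_vertices S.
Proof. by move=> eS; apply/sub_verticesP; exists e; rewrite // /incident eqxx. Qed.

Lemma card_sub_vertices_gt1 S e : e \in S -> src e != tgt e -> 1 < #|sub_vertices S|.
Proof.
move=> eS not_loop; have := cards2 (src e) (tgt e); rewrite not_loop => <-.
apply/subset_leq_card/subsetP => x; rewrite in_set2 => /orP [] /eqP ->; apply/sub_verticesP;
  by exists e; rewrite // /incident eqxx ?orbT.
Qed.

Lemma sub_connectedP S :
  reflect ((exists x, x \in sub_vertices S) /\
           {in sub_vertices S &, forall x y, connect (adj_in S) x y})
          (sub_connected S).
Proof.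
apply: (iffP andP) => [[/card_gt0P [x Sx] /forallP cS] | [[x Sx] cS]].
  by split; [exists x | move=> y z Sy Sz; move: (cS y) => /implyP/(_ Sy)/forall_inP; apply].
split; first by apply/card_gt0P; exists x.
by apply/forall_inP => y Sy; apply/forall_inP => z Sz; apply: cS.
Qed.

Lemma homo_connect_adj_in (U : finType) (r : rel U) (h : gV H -> U) S :
  connect_sym r -> (forall e, e \in S -> connect r (h (src e)) (h (tgt e))) ->
  {homo h : x y / connect (adj_in S) x y >-> connect r x y}.
Proof.
move=> r_sym hS; apply: homo_connect => x y /existsP [e /andP [eS]].
by case/orP=> /andP [/eqP <- /eqP <-]; last rewrite r_sym; apply: hS.
Qed.

Lemma cXE S : cX S = [&& S != setT, sub_connected S & #|sub_vertices S| <= #|S|].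
Proof. by rewrite /cX properT /pi1_rank subn_gt0 addn1 ltnS. Qed.

End Subgraphs.

(** * Smoothing a vertex of valence two *)

Section Smoothing.
Variables (G : graph) (v : gV G) (e1 e2 : gE G) (a' b' : {x : gV G | x != v}).
Hypotheses (v_deg2 : valence v = 2) (e1_neq_e2 : e1 != e2)
  (e1v : incident e1 v) (e2v : incident e2 v)
  (a'E : val a' = other_end e1 v) (b'E : val b' = other_end e2 v).

Local Notation G' := (smooth e1 e2 a' b').
Local Notation e_v := (None : gE G').
Local Notation rest_edge := {e : gE G | e \notin [set e1; e2]}.
Implicit Types (S : {set gE G}).

Lemma incident_v_e12 e : incident e v -> e \in [set e1; e2].
Proof.
move=> e_at_v; apply: contraT => e12.
have: #|e |: [set e1; e2]| <= valence v.
  apply: leq_trans (card_incident_le_valence v); apply: subset_leq_card.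
  by apply/subsetP => f; rewrite !inE => /or3P [] /eqP ->.
by rewrite cardsU1 e12 cards2 e1_neq_e2 v_deg2.
Qed.

Lemma rest_edge_avoids_v (u : rest_edge) : (src (val u) != v) && (tgt (val u) != v).
Proof. by rewrite -negb_or; apply: contra (valP u); apply: incident_v_e12. Qed.

Lemma val_ends_some (u : rest_edge) :
  val (src (Some u : gE G')) = src (val u) /\ val (tgt (Some u : gE G')) = tgt (val u).
Proof. by case/andP: (rest_edge_avoids_v u) => sv tv; rewrite /= !insubdK. Qed.

Lemma incident_some (u : rest_edge) (x : gV G') :
  incident (Some u : gE G') x = incident (val u) (val x).
Proof. by rewrite /incident -!val_eqE; case: (val_ends_some u) => -> ->. Qed.

Lemma incident_e_v (x : gV G') : incident e_v x = (x == a') || (x == b').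
Proof. by rewrite /incident /= !(eq_sym x). Qed.

Section FarEnd.
Variables (e : gE G) (c : gV G').
Hypotheses (e_at_v : incident e v) (cE : val c = other_end e v).

Lemma incident_far_end (x : gV G') : incident e (val x) = (x == c).
Proof.
rewrite /incident -val_eqE cE; case: (incident_ends e_at_v) => [[-> ->] | [-> ->]];
  by rewrite !(eq_sym _ (val x)) (negbTE (valP x)) ?orbF.
Qed.

Lemma far_end_not_loop : src e != tgt e.
Proof.
by case: (incident_ends e_at_v) => [[-> ->] | [-> ->]]; rewrite -cE ?(eq_sym v) (valP c).
Qed.

End FarEnd.

Definition smooth_set S : {set gE G'} :=
  [set f : gE G' | if f is Some u then val u \in S else (e1 \in S) && (e2 \in S)].

(* [insub e] is the new edge [None] exactly when [e] is [e1] or [e2]. *)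
Definition unsmooth_set (S' : {set gE G'}) : {set gE G} := [set e | insub e \in S'].

Lemma mem_unsmooth_set_rest (S' : {set gE G'}) (u : rest_edge) :
  (val u \in unsmooth_set S') = (Some u \in S').
Proof. by rewrite inE valK. Qed.

Lemma mem_unsmooth_set_e1 (S' : {set gE G'}) : (e1 \in unsmooth_set S') = (e_v \in S').
Proof. by rewrite inE insubN // negbK !inE eqxx. Qed.

Lemma mem_unsmooth_set_e2 (S' : {set gE G'}) : (e2 \in unsmooth_set S') = (e_v \in S').
Proof. by rewrite inE insubN // negbK !inE eqxx orbT. Qed.

Lemma smooth_setK : cancel unsmooth_set smooth_set.
Proof.
move=> S'; apply/setP => -[u|]; rewrite inE ?mem_unsmooth_set_rest //.
by rewrite mem_unsmooth_set_e1 mem_unsmooth_set_e2 andbb.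
Qed.

Lemma unsmooth_smooth_set_sub S : unsmooth_set (smooth_set S) \subset S.
Proof.
apply/subsetP => e; rewrite inE; case: insubP => [u _ <- | /negbNE]; first by rewrite inE.
by rewrite !inE => /orP [] /eqP -> /andP [].
Qed.

Lemma smooth_set_homo : {homo smooth_set : S T / S \subset T}.
Proof.
move=> S T /subsetP ST; apply/subsetP => -[u|]; rewrite !inE; first exact: ST.
by case/andP => /ST -> /ST.
Qed.

Lemma unsmooth_set_homo : {homo unsmooth_set : S' T' / S' \subset T'}.
Proof. by move=> S' T' /subsetP ST; apply/subsetP => e; rewrite !inE => /ST. Qed.

Lemma unsmooth_setT : unsmooth_set setT = setT.
Proof. by apply/setP => e; rewrite !inE. Qed.

Lemma smooth_setT : smooth_set setT = setT.
Proof. by apply/setP => -[u|]; rewrite !inE. Qed.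

Lemma card_split_e12 S : #|S| = (e1 \in S) + (e2 \in S) + #|[set u : rest_edge | val u \in S]|.
Proof.
rewrite card_sig_setD (cardsD1 e1) (cardsD1 e2 (S :\ e1)) in_setD1 eq_sym e1_neq_e2 /=.
by rewrite setDDl addnA.
Qed.

Lemma card_smooth_set S : #|smooth_set S| + ((e1 \in S) || (e2 \in S)) = #|S|.
Proof.
rewrite card_split_e12 card_set_option inE.
have -> : [set u | Some u \in smooth_set S] = [set u : rest_edge | val u \in S].
  by apply/setP => u; rewrite !inE.
by case: (e1 \in S); case: (e2 \in S); rewrite /= ?addn0 ?addn1 ?addnS.
Qed.

Lemma card_unsmooth_set (S' : {set gE G'}) : #|unsmooth_set S'| = (e_v \in S') + #|S'|.
Proof.
rewrite card_split_e12 card_set_option mem_unsmooth_set_e1 mem_unsmooth_set_e2.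
have -> : [set u : rest_edge | val u \in unsmooth_set S'] = [set u | Some u \in S'].
  by apply/setP => u; rewrite !inE valK.
by rewrite addnA.
Qed.

Lemma v_in_sub_vertices S : (v \in sub_vertices S) = (e1 \in S) || (e2 \in S).
Proof.
apply/sub_verticesP/orP => [[e eS /incident_v_e12] | [] eS].
- by rewrite !inE => /orP [] /eqP eE; [left | right]; rewrite -eE.
- by exists e1.
- by exists e2.
Qed.

Lemma smooth_sub_vertices S (x : gV G') :
  x \in sub_vertices (smooth_set S) -> val x \in sub_vertices S.
Proof.
case/sub_verticesP => -[u|] + xf; rewrite inE.
  by move=> uS; apply/sub_verticesP; exists (val u); rewrite -?incident_some.
case/andP => e1S e2S; move: xf; rewrite incident_e_v => /orP [] xc; apply/sub_verticesP.
  by exists e1; rewrite // (incident_far_end e1v a'E).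
by exists e2; rewrite // (incident_far_end e2v b'E).
Qed.

Lemma unsmooth_sub_vertices (S' : {set gE G'}) (x : gV G') :
  (val x \in sub_vertices (unsmooth_set S')) = (x \in sub_vertices S').
Proof.
apply/sub_verticesP/sub_verticesP => [[e + ex] | [[u|] fS xf]].
- rewrite inE; case: insubP => [u _ eu uS | /negbNE e12 evS].
    by exists (Some u); rewrite // incident_some eu.
  exists e_v; rewrite // incident_e_v; move: e12 ex; rewrite !inE => /orP [] /eqP ->.
    by rewrite (incident_far_end e1v a'E) => ->.
  by rewrite (incident_far_end e2v b'E) => ->; rewrite orbT.
- by exists (val u); rewrite ?mem_unsmooth_set_rest -?incident_some.
- move: xf; rewrite incident_e_v => /orP [] xc.
    by exists e1; rewrite ?mem_unsmooth_set_e1 ?(incident_far_end e1v a'E).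
  by exists e2; rewrite ?mem_unsmooth_set_e2 ?(incident_far_end e2v b'E).
Qed.

Lemma card_sub_vertices_smooth S :
  #|sub_vertices (smooth_set S)| + ((e1 \in S) || (e2 \in S)) <= #|sub_vertices S|.
Proof.
rewrite -v_in_sub_vertices [leqRHS](cardsD1 v) addnC leq_add2l.
rewrite -(card_imset _ val_inj); apply/subset_leq_card/subsetP => _ /imsetP [x xV ->].
by rewrite in_setD1 (valP x) smooth_sub_vertices.
Qed.

Lemma card_sub_vertices_unsmooth (S' : {set gE G'}) :
  #|sub_vertices (unsmooth_set S')| <= (e_v \in S') + #|sub_vertices S'|.
Proof.
rewrite (cardsD1 v) v_in_sub_vertices mem_unsmooth_set_e1 mem_unsmooth_set_e2 orbb leq_add2l.
rewrite -(card_imset _ val_inj); apply/subset_leq_card/subsetP => x.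
rewrite in_setD1 => /andP [xv xV]; apply/imsetP.
by exists (Sub x xv); rewrite -?unsmooth_sub_vertices.
Qed.

Lemma connect_far_end S e (c : gV G') :
  incident e v -> val c = other_end e v -> e \in S -> connect (adj_in S) v (val c).
Proof.
move=> e_at_v cE eS; have := connect_edge eS.
by rewrite (connect_ends id (connect_adj_in_sym S) e_at_v) -cE.
Qed.

Definition smooth_vertex S (x : gV G) : gV G' :=
  if x == v then (if e1 \in S then a' else b') else insubd a' x.

Lemma smooth_vertex_val S (x : gV G') : smooth_vertex S (val x) = x.
Proof. by rewrite /smooth_vertex (negbTE (valP x)) valKd. Qed.

Lemma connect_smooth_vertex S :
  {homo smooth_vertex S : x y / connect (adj_in S) x y >-> connect (adj_in (smooth_set S)) x y}.
Proof.
have sym := connect_adj_in_sym (smooth_set S).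
apply: (homo_connect_adj_in sym) => e eS.
case: (boolP (e \in [set e1; e2])) => [| e12].
  rewrite !inE => /orP [] /eqP eE; move: eS; rewrite eE => eS.
    by rewrite (connect_ends _ sym e1v) -a'E smooth_vertex_val /smooth_vertex eqxx eS.
  rewrite (connect_ends _ sym e2v) -b'E smooth_vertex_val /smooth_vertex eqxx.
  case: ifP => e1S //; apply: (connect_edge (e := e_v)); by rewrite inE e1S.
case/andP: (rest_edge_avoids_v (Sub e e12)) => /= sv tv.
rewrite /smooth_vertex (negbTE sv) (negbTE tv).
by apply: (connect_edge (e := Some (Sub e e12) : gE G')); rewrite inE.
Qed.

Lemma connect_unsmooth (S' : {set gE G'}) :
  {homo val : x y / connect (adj_in S') x y >-> connect (adj_in (unsmooth_set S')) x y}.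
Proof.
have sym := connect_adj_in_sym (unsmooth_set S').
apply: (@homo_connect_adj_in G' _ _ val S' sym) => -[u|] fS.
  by have [-> ->] := val_ends_some u; apply: connect_edge; rewrite mem_unsmooth_set_rest.
apply: (@connect_trans _ _ v); first rewrite sym.
  by apply: (connect_far_end e1v a'E); rewrite mem_unsmooth_set_e1.
by apply: (connect_far_end e2v b'E); rewrite mem_unsmooth_set_e2.
Qed.

Lemma unsmooth_set_connected (S' : {set gE G'}) :
  sub_connected S' -> sub_connected (unsmooth_set S').
Proof.
case/sub_connectedP => [[x xV] cS']; apply/sub_connectedP; split.
  by exists (val x); rewrite unsmooth_sub_vertices.
have near_val y : y \in sub_vertices (unsmooth_set S') ->
    exists2 y', y' \in sub_vertices S' & connect (adj_in (unsmooth_set S')) y (val y').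
  case: (eqVneq y v) => [-> | yv yV]; last by exists (Sub y yv); rewrite -?unsmooth_sub_vertices.
  rewrite v_in_sub_vertices mem_unsmooth_set_e1 mem_unsmooth_set_e2 orbb => evS.
  exists a'; first exact: (src_sub_vertices evS).
  by apply: (connect_far_end e1v a'E); rewrite mem_unsmooth_set_e1.
move=> y z /near_val [y' y'V yy'] /near_val [z' z'V zz'].
apply: connect_trans yy' (connect_trans (connect_unsmooth (cS' _ _ y'V z'V)) _).
by rewrite connect_adj_in_sym.
Qed.

Lemma smooth_set_connected_in S : sub_connected S ->
  {in sub_vertices (smooth_set S) &, forall x y, connect (adj_in (smooth_set S)) x y}.
Proof.
case/sub_connectedP => _ cS x y /smooth_sub_vertices xV /smooth_sub_vertices yV.
by rewrite -(smooth_vertex_val S x) -(smooth_vertex_val S y); apply/connect_smooth_vertex/cS.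
Qed.

Lemma smooth_set_cX S : cX S -> cX (smooth_set S).
Proof.
rewrite !cXE => /and3P [ST cS rkS].
have [[x xV] _] := sub_connectedP _ cS.
have V_gt0 : 0 < #|sub_vertices S| by apply/card_gt0P; exists x.
have V_gt1 : (e1 \in S) || (e2 \in S) -> 1 < #|sub_vertices S|.
  case/orP => eS; apply: card_sub_vertices_gt1 eS _.
    exact: (far_end_not_loop e1v a'E).
  exact: (far_end_not_loop e2v b'E).
have smooth_gt0 : 0 < #|smooth_set S|.
  move: V_gt1 (card_smooth_set S); case: (_ || _) => /= [/(_ isT)|_]; lia.
apply/and3P; split.
- apply: contra_neq ST => smoothT; apply/eqP; rewrite -subTset.
  by rewrite -unsmooth_setT -smoothT unsmooth_smooth_set_sub.
- apply/sub_connectedP; split; last exact: smooth_set_connected_in.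
  by case/card_gt0P: smooth_gt0 => f fS; exists (src f); apply: src_sub_vertices.
- by have := card_smooth_set S; have := card_sub_vertices_smooth S; lia.
Qed.

Lemma unsmooth_set_cX (S' : {set gE G'}) : cX S' -> cX (unsmooth_set S').
Proof.
rewrite !cXE => /and3P [ST cS rkS]; apply/and3P; split.
- by apply: contra_neq ST => unsmoothT; rewrite -[S']smooth_setK unsmoothT smooth_setT.
- exact: unsmooth_set_connected.
- rewrite card_unsmooth_set; apply: leq_trans (card_sub_vertices_unsmooth S') _.
  by rewrite leq_add2l.
Qed.

End Smoothing.

(** * Realizations of order complexes *)

Local Open Scope R_scope.

Section RealSums.
Variable I : finType.
Implicit Types (P A B : pred I) (F G : I -> R).

Lemma rsum_ge0 P F : (forall i, P i -> 0 <= F i) -> 0 <= \big[Rplus/0]_(i | P i) F i.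
Proof. by move=> F0; apply: (big_ind (fun a => 0 <= a)) => // *; lra. Qed.

Lemma rsum_le P F G :
  (forall i, P i -> F i <= G i) ->
  \big[Rplus/0]_(i | P i) F i <= \big[Rplus/0]_(i | P i) G i.
Proof. by move=> FG; apply: (big_ind2 (fun a b => a <= b)) => // *; lra. Qed.

Lemma rsumB P F G :
  \big[Rplus/0]_(i | P i) F i - \big[Rplus/0]_(i | P i) G i =
  \big[Rplus/0]_(i | P i) (F i - G i).
Proof. by apply: (big_ind3 (fun a b c => a - b = c)) => // *; lra. Qed.

Lemma rsum_const c : \big[Rplus/0]_(i : I) c = INR #|I| * c.
Proof.
rewrite cardT -big_enum /=; elim: (enum I) => [|i s IHs]; first by rewrite big_nil /=; lra.
rewrite big_cons IHs; change (size (i :: s)) with (size s).+1; rewrite S_INR; lra.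
Qed.

Lemma rsum_pred_add_le A B F j :
  (forall i, 0 <= F i) -> (forall i, A i -> B i) -> B j -> ~~ A j ->
  \big[Rplus/0]_(i | A i) F i + F j <= \big[Rplus/0]_(i | B i) F i.
Proof.
move=> F0 AB Bj Aj; rewrite [X in _ <= X](bigD1 j) //= Rplus_comm; apply: Rplus_le_compat_l.
rewrite big_mkcond [X in _ <= X]big_mkcond; apply: rsum_le => i _ /=.
case: (eqVneq i j) => [-> | _]; first by rewrite (negbTE Aj) /= andbF; lra.
have := F0 i; rewrite andbT; case Ai: (A i); first by rewrite AB //; lra.
by case: (B i); lra.
Qed.

Lemma rsum_gt0_ex P F : 0 < \big[Rplus/0]_(i | P i) F i -> exists i, P i /\ 0 < F i.
Proof.
move=> sum_gt0; apply: NNPP => noF.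
have : \big[Rplus/0]_(i | P i) F i <= \big[Rplus/0]_(i | P i) 0.
  by apply: rsum_le => i Pi; apply: Rnot_lt_le => Fi; apply: noF; exists i.
by rewrite big1_eq; lra.
Qed.

Lemma rsum_dist P F G c :
  0 <= c -> (forall i, P i -> Rabs (F i - G i) <= c) ->
  Rabs (\big[Rplus/0]_(i | P i) F i - \big[Rplus/0]_(i | P i) G i) <= INR #|I| * c.
Proof.
move=> c0 FG; rewrite rsumB big_mkcond -rsum_const.
apply: (big_ind2 (fun a b => Rabs a <= b)) => [| a a' b b' aa' bb' | i _] /=.
- by rewrite Rabs_R0; lra.
- by have := Rabs_triang a b; lra.
- by case: ifP => [/FG // | _]; rewrite Rabs_R0.
Qed.

End RealSums.

Lemma exists_small_delta (K eps : R) : 0 < eps -> 0 <= K -> exists d, 0 < d /\ K * d < eps.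
Proof.
move=> eps0 K0; set d := eps / (K + 1).
have d0 : 0 < d by apply: Rdiv_lt_0_compat; lra.
have dK : d * (K + 1) = eps by rewrite /d; field; lra.
by exists d; split=> //; nra.
Qed.

Definition pushforward (T U : finType) (f : T -> U) (x : T -> R) : U -> R :=
  fun u => \big[Rplus/0]_(t | f t == u) x t.

Section Pushforward.
Variables (T U : finType) (f : T -> U).

Lemma pushforward_sum x : \big[Rplus/0]_(u : U) pushforward f x u = \big[Rplus/0]_(t : T) x t.
Proof. by rewrite (partition_big f predT). Qed.

Lemma pushforward_comp (W : finType) (g : U -> W) x :
  pushforward g (pushforward f x) = pushforward (g \o f) x.
Proof.
apply: functional_extensionality => w.
rewrite /pushforward [RHS](partition_big f (fun u => g u == w)) //.
apply: eq_bigr => u /eqP <-; apply: eq_bigl => t.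
by case: eqP => /= [-> | _]; rewrite ?eqxx ?andbF.
Qed.

Lemma realization_support (P : pred T) (le : rel T) x t : realization P le x -> 0 < x t -> P t.
Proof. by move=> [_ [xP _]] xt; apply: contraTT isT => /xP xt0; lra. Qed.

Lemma realization_pushforward (P : pred T) (Q : pred U) (le : rel T) (le' : rel U) x :
  {in P, forall t, Q (f t)} -> {in P &, {homo f : s t / le s t >-> le' s t}} ->
  realization P le x -> realization Q le' (pushforward f x).
Proof.
move=> fPQ f_homo X; case: (X) => [x0 [xP [x1 xc]]]; split; [|split; [|split]].
- by move=> u; apply: rsum_ge0.
- move=> u Qu; apply: big1 => t /eqP ftu; apply: xP; apply: contra Qu => Pt.
  by rewrite -ftu fPQ.
- by rewrite pushforward_sum.
- move=> _ _ /rsum_gt0_ex [s [/eqP <- xs]] /rsum_gt0_ex [t [/eqP <- xt]].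
  have Ps := realization_support X xs; have Pt := realization_support X xt.
  by case: (xc s t xs xt) => st; [left | right]; apply: f_homo.
Qed.

Lemma pushforward_dist x y c :
  0 <= c -> (forall t, Rabs (y t - x t) <= c) ->
  forall u, Rabs (pushforward f y u - pushforward f x u) <= INR #|T| * c.
Proof. by move=> c0 yx u; apply: rsum_dist. Qed.

Lemma continuous_pushforward (A : (T -> R) -> Prop) : continuous_on A (pushforward f).
Proof.
move=> x _ eps eps0; have [d [d0 dK]] := exists_small_delta eps0 (pos_INR #|T|).
exists d; split=> // y _ yx u; apply: Rle_lt_trans dK.
by apply: pushforward_dist => [|t]; [lra | apply: Rlt_le].
Qed.

End Pushforward.

Section OrderHomotopy.
Variable E : finType.
Local Notation incl := (fun S T : {set E} => S \subset T).
Implicit Types (x y : {set E} -> R) (S T : {set E}) (P : pred {set E}).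

Definition mass_below x S : R := \big[Rplus/0]_(T : {set E} | (#|T| < #|S|)%N) x T.

(* The part of the weight of [S] that [order_homotopy t] moves to [f S]: a total weight
   [1 - t] is moved, taken from the vertices in order of increasing size, i.e. from the
   bottom of a chain upwards. *)
Definition moved_mass t x S : R := Rmin (x S) (Rmax 0 (1 - t - mass_below x S)).

Lemma mass_below_add x S T :
  (forall U, 0 <= x U) -> (#|S| < #|T|)%N -> mass_below x S + x S <= mass_below x T.
Proof.
move=> x0 ST; apply: rsum_pred_add_le => //; last by rewrite /= ltnn.
by move=> U /ltn_trans; apply.
Qed.

Lemma mass_below_le1 P x S : realization P incl x -> mass_below x S + x S <= 1.
Proof.
case=> [x0 [_ [x1 _]]]; rewrite -x1.
by apply: (rsum_pred_add_le (B := predT)); rewrite ?ltnn.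
Qed.

Lemma moved_mass_ge0 t x S : 0 <= x S -> 0 <= moved_mass t x S.
Proof. by rewrite /moved_mass; unfold Rmin, Rmax; repeat destruct Rle_dec; lra. Qed.

Lemma moved_mass_le t x S : moved_mass t x S <= x S.
Proof. by rewrite /moved_mass; unfold Rmin, Rmax; repeat destruct Rle_dec; lra. Qed.

Lemma moved_mass_gt0 t x S : 0 < moved_mass t x S -> mass_below x S < 1 - t.
Proof. by rewrite /moved_mass; unfold Rmin, Rmax; repeat destruct Rle_dec; lra. Qed.

Lemma moved_mass_lt t x S : moved_mass t x S < x S -> 1 - t < mass_below x S + x S.
Proof. by rewrite /moved_mass; unfold Rmin, Rmax; repeat destruct Rle_dec; lra. Qed.

Lemma moved_mass_dist s t x y S :
  Rabs (moved_mass s y S - moved_mass t x S) <=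
  Rabs (y S - x S) + Rabs (s - t) + Rabs (mass_below y S - mass_below x S).
Proof.
rewrite /moved_mass; move: (mass_below y S) (mass_below x S) (y S) (x S) => a b c d.
by unfold Rmin, Rmax, Rabs; repeat destruct Rle_dec; repeat destruct Rcase_abs; lra.
Qed.

Lemma moved_mass_sub P t x S T :
  realization P incl x -> 0 < moved_mass t x S -> moved_mass t x T < x T -> S \subset T.
Proof.
move=> X mS mT; case: (X) => [x0 [_ [_ xc]]].
have xS : 0 < x S by have := moved_mass_le t x S; lra.
have xT : 0 < x T by have := moved_mass_ge0 t (x0 T); lra.
case: (xc S T xS xT) => // TS; case: (eqVneq T S) => [-> // | TneS].
have : mass_below x T + x T <= mass_below x S.
  by apply: mass_below_add x0 _; rewrite proper_card // properEneq TneS.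
by have := moved_mass_gt0 mS; have := moved_mass_lt mT; lra.
Qed.

Lemma moved_mass0 P x : realization P incl x -> moved_mass 0 x = x.
Proof.
move=> X; apply: functional_extensionality => S; have := mass_below_le1 S X.
case: X => [x0 _]; have := x0 S; rewrite /moved_mass.
by unfold Rmin, Rmax; repeat destruct Rle_dec; lra.
Qed.

Lemma moved_mass1 x : (forall S, 0 <= x S) -> moved_mass 1 x = fun=> 0.
Proof.
move=> x0; apply: functional_extensionality => S.
have := x0 S; have : 0 <= mass_below x S by apply: rsum_ge0.
by rewrite /moved_mass; unfold Rmin, Rmax; repeat destruct Rle_dec; lra.
Qed.

Section Homotopy.
Variables (P : pred {set E}) (f : {set E} -> {set E}).
Hypotheses (fP : {in P, forall S, P (f S)})
  (f_homo : {in P &, {homo f : S T / S \subset T}})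
  (f_le : {in P, forall S, f S \subset S}).

Definition order_homotopy t x : {set E} -> R :=
  fun S => pushforward f (moved_mass t x) S + (x S - moved_mass t x S).

Lemma realization_order_homotopy t x :
  realization P incl x -> realization P incl (order_homotopy t x).
Proof.
move=> X; case: (X) => [x0 [xP [x1 xc]]].
have m0 S := moved_mass_ge0 t (x0 S); have mx S := moved_mass_le t x S.
have mP S : ~~ P S -> moved_mass t x S = 0 by move=> /xP; have := m0 S; have := mx S; lra.
have mpos S : 0 < moved_mass t x S -> 0 < x S /\ P S.
  move=> mS; have xS : 0 < x S by have := mx S; lra.
  by split=> //; apply: realization_support X xS.
split; [|split; [|split]].
- move=> S; have := mx S; have : 0 <= pushforward f (moved_mass t x) S by apply: rsum_ge0.
  rewrite /order_homotopy; lra.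
- move=> S nPS; rewrite /order_homotopy /pushforward mP // (xP S nPS) big1; first lra.
  by move=> T /eqP fTS; apply: mP; apply: contra nPS => PT; rewrite -fTS fP.
- rewrite /order_homotopy big_split /= pushforward_sum -rsumB x1; lra.
- have supp S : 0 < order_homotopy t x S ->
      (exists2 T, f T = S & 0 < moved_mass t x T) \/ moved_mass t x S < x S.
    rewrite /order_homotopy => hS.
    case: (Rlt_le_dec 0 (pushforward f (moved_mass t x) S)) => [| push0]; last by right; lra.
    by case/rsum_gt0_ex => T [/eqP <- mT]; left; exists T.
  move=> U1 U2 /supp [[S1 <- m1] | l1] /supp [[S2 <- m2] | l2].
  + have [[xS1 P1] [xS2 P2]] := (mpos _ m1, mpos _ m2).
    by case: (xc S1 S2 xS1 xS2) => S12; [left | right]; apply: f_homo.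
  + have [_ P1] := mpos _ m1.
    by left; apply: subset_trans (f_le P1) (moved_mass_sub X m1 l2).
  + have [_ P2] := mpos _ m2.
    by right; apply: subset_trans (f_le P2) (moved_mass_sub X m2 l1).
  + by apply: xc; [have := m0 U1 | have := m0 U2]; lra.
Qed.

Lemma order_homotopy0 x : realization P incl x -> order_homotopy 0 x = pushforward f x.
Proof.
move=> X; apply: functional_extensionality => S.
by rewrite /order_homotopy (moved_mass0 X); lra.
Qed.

Lemma order_homotopy1 x : realization P incl x -> order_homotopy 1 x = x.
Proof.
case=> x0 _; apply: functional_extensionality => S.
rewrite /order_homotopy (moved_mass1 x0) /pushforward big1_eq; lra.
Qed.

Lemma order_homotopy_dist s t x y d :
  0 <= d -> Rabs (s - t) <= d -> (forall S, Rabs (y S - x S) <= d) ->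
  forall S, Rabs (order_homotopy s y S - order_homotopy t x S) <= (INR #|{set E}| + 2) ^ 2 * d.
Proof.
move=> d0 st yx S; set n := INR #|{set E}|; have n0 : 0 <= n := pos_INR _.
have mm T : Rabs (moved_mass s y T - moved_mass t x T) <= (n + 2) * d.
  have := moved_mass_dist s t x y T; have := yx T.
  have : Rabs (mass_below y T - mass_below x T) <= n * d by apply: rsum_dist => // U _.
  lra.
have mm0 : 0 <= (n + 2) * d by apply: Rmult_le_pos; lra.
have := pushforward_dist f mm0 mm S.
have := yx S; have := mm S; have : 0 <= n * d by apply: Rmult_le_pos.
rewrite /order_homotopy -/n.
move: (pushforward f _ S) (pushforward f _ S) (moved_mass s y S) (moved_mass t x S) => a b c e.
by unfold Rabs; repeat destruct Rcase_abs; nra.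
Qed.

Lemma pushforward_homotopic_id :
  homotopic (realization P incl) (realization P incl) (pushforward f) (fun x => x).
Proof.
exists order_homotopy; split; [|split; [|split]].
- by move=> t x _; apply: realization_order_homotopy.
- move=> t x _ _ eps eps0.
  have [d [d0 dK]] := exists_small_delta eps0 (pow2_ge_0 (INR #|{set E}| + 2)).
  exists d; split=> // s y _ _ st yx S; apply: Rle_lt_trans dK.
  by apply: order_homotopy_dist => [| | U]; [lra | lra | apply: Rlt_le].
- exact: order_homotopy0.
- exact: order_homotopy1.
Qed.

End Homotopy.
End OrderHomotopy.

Section RealizationMaps.
Variables (E F : finType) (P : pred {set E}) (Q : pred {set F}).
Variables (f : {set E} -> {set F}) (g : {set F} -> {set E}).
Hypotheses (fPQ : {in P, forall S, Q (f S)}) (gQP : {in Q, forall S, P (g S)})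
  (f_homo : {in P &, {homo f : S T / S \subset T}})
  (g_homo : {in Q &, {homo g : S T / S \subset T}}).

Lemma pushforward_comp_homotopic_id :
  {in P, forall S, g (f S) \subset S} ->
  homotopic (realization P (fun S T => S \subset T)) (realization P (fun S T => S \subset T))
    (fun x => pushforward g (pushforward f x)) (fun x => x).
Proof.
move=> gf_le; have -> : (fun x => pushforward g (pushforward f x)) = pushforward (g \o f).
  by apply: functional_extensionality => x; apply: pushforward_comp.
apply: pushforward_homotopic_id => [S PS | S T PS PT ST | //].
  exact/gQP/fPQ.
by apply: g_homo; [apply: fPQ | apply: fPQ | apply: f_homo].
Qed.

End RealizationMaps.

Lemma realization_homotopy_equivalent (E F : finType) (P : pred {set E}) (Q : pred {set F})
    (f : {set E} -> {set F}) (g : {set F} -> {set E}) :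
  {in P, forall S, Q (f S)} -> {in Q, forall S, P (g S)} ->
  {in P &, {homo f : S T / S \subset T}} -> {in Q &, {homo g : S T / S \subset T}} ->
  {in P, forall S, g (f S) \subset S} -> {in Q, forall S, f (g S) \subset S} ->
  homotopy_equivalent (realization P (fun S T => S \subset T))
                      (realization Q (fun S T => S \subset T)).
Proof.
move=> fPQ gQP f_homo g_homo gf_le fg_le.
exists (pushforward f), (pushforward g); split; [|split; [|split; [|split; [|split]]]].
- by move=> x; apply: realization_pushforward fPQ f_homo.
- by move=> y; apply: realization_pushforward gQP g_homo.
- exact: continuous_pushforward.
- exact: continuous_pushforward.
- exact: pushforward_comp_homotopic_id fPQ gQP f_homo g_homo gf_le.
- exact: pushforward_comp_homotopic_id gQP fPQ g_homo f_homo fg_le.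
Qed.

Local Close Scope R_scope.

Theorem lemma4 (G : graph) (v : gV G) (e1 e2 : gE G) (a' b' : {x : gV G | x != v}) :
  connected_graph G ->
  valence v = 2 ->
  e1 != e2 -> incident e1 v -> incident e2 v ->
  val a' = other_end e1 v -> val b' = other_end e2 v ->
  homotopy_equivalent (@cX_space G) (@cX_space (smooth e1 e2 a' b')).
Proof.
move=> _ v_deg2 e1_neq_e2 e1v e2v a'E b'E.
rewrite /cX_space; apply: (realization_homotopy_equivalent (f := smooth_set e1 e2 a' b')
                                                  (g := @unsmooth_set _ _ e1 e2 a' b')).
- by move=> S; apply: smooth_set_cX.
- by move=> S'; apply: unsmooth_set_cX.
- by move=> S T _ _; apply: smooth_set_homo.
- by move=> S' T' _ _; apply: unsmooth_set_homo.
- by move=> S _; apply: unsmooth_smooth_set_sub.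
- by move=> S' _; rewrite smooth_setK.
Qed.
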